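(* Let $G$ be a (weighted) graph that is not a multigraph and is $2$-connected, and let $s, d$ be a source-destination pair. Suppose a forwarding subgraph (FS) uses the shortest path $P(s,d)$ between $s$ and $d$ as the primary path and can avoid any single link failure along the primary path. Then the FS has at least $2|P(s,d)| + 1$ edges, where $|P(s,d)|$ is the number of edges of $P(s,d)$. Moreover, there exist graphs for which this bound is tight.
   Context: A forwarding subgraph (FS) is a directed acyclic subgraph of the network graph specifying the paths a packet may take from source $s$ to destination $d$. It contains a designated primary path from $s$ to $d$. ''Avoiding any single link failure along the primary path'' means that for every node $v_i$ on the primary path, the FS contains an alternate path from $v_i$ to $d$ that does not use $v_i$'s outgoing primary-path link. Throughout, the graph is assumed not to be a multigraph and to be $2$-connected. *)

From mathcomp Require Import all_boot all_order all_algebra.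
Set Implicit Arguments. Unset Strict Implicit. Unset Printing Implicit Defensive.
Import Order.TTheory GRing.Theory Num.Theory.

Section Defs.
Variable T : finType.

Definition simple_graph (e : rel T) : Prop := symmetric e /\ irreflexive e.

Definition connected_on (e : rel T) (A : {set T}) : Prop :=
  {in A &, forall x y, connect [rel u v | [&& e u v, u \in A & v \in A]] x y}.

Definition two_connected (e : rel T) : Prop :=
  (2 < #|T|)%N /\ connected_on e setT /\ forall v, connected_on e (~: [set v]).

Definition walk (r : rel T) (x y : T) (p : seq T) : bool :=
  path r x p && (last x p == y).

Definition simple_path (r : rel T) (x y : T) (p : seq T) : bool :=
  walk r x y p && uniq (x :: p).

Definition positive_weights (R : numDomainType) (e : rel T) (w : T -> T -> R) : Prop :=
  forall x y, e x y -> (0 < w x y)%R /\ w x y = w y x.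

Definition path_weight (R : numDomainType) (w : T -> T -> R) (x : T) (p : seq T) : R :=
  (\sum_(uv <- zip (x :: p) p) w uv.1 uv.2)%R.

Definition shortest_path (R : numDomainType) (e : rel T) (w : T -> T -> R)
    (s d : T) (p : seq T) : Prop :=
  simple_path e s d p /\
  forall q, walk e s d q -> (path_weight w s p <= path_weight w s q)%R.

Definition arcs (F : {set T * T}) : rel T := fun x y => (x, y) \in F.

Definition acyclic (F : {set T * T}) : Prop :=
  forall x p, path (arcs F) x p -> last x p = x -> p = [::].

Definition forwarding_subgraph (e : rel T) (s d : T) (p : seq T)
    (F : {set T * T}) : Prop :=
  [/\ forall x y, (x, y) \in F -> e x y,
      acyclic F &
      walk (arcs F) s d p].

Definition uses_link (x y : T) (x0 : T) (q : seq T) : bool :=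
  has (fun uv => (uv == (x, y)) || (uv == (y, x))) (zip (x0 :: q) q).

Definition avoids_single_link_failure (s d : T) (p : seq T)
    (F : {set T * T}) : Prop :=
  forall i, (i < size p)%N ->
    let v := nth s (s :: p) i in
    let v' := nth s (s :: p) i.+1 in
    exists q, walk (arcs F) v d q && ~~ uses_link v v' v q.

End Defs.

(* Every vertex v_0, ..., v_(k-1) of the primary path has two outgoing arcs in
   the forwarding subgraph: its primary arc and the first arc of its backup
   path, which must leave along another link.  The backup path of v_(k-1)
   cannot step straight to d, so its second arc leaves some vertex u; u is not
   on the primary path, since the arc v_(k-1) -> u would close a directed
   cycle.  This arc is the (2k+1)-th.
   For tightness take a path v_0 ... v_k with unit weights, joined to two
   adjacent apex vertices by edges of weight k: every v_i with i < k detours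
   to d through one apex.  The potential v_i |-> i shows that the path is
   shortest, and each apex stays adjacent to all vertices when any other
   vertex is deleted, which gives 2-connectivity. *)

From mathcomp Require Import all_boot all_order all_algebra.
From mathcomp Require Import zify.
Set Implicit Arguments. Unset Strict Implicit. Unset Printing Implicit Defensive.
Import Order.TTheory GRing.Theory Num.Theory.

Section ArcCounting.
Variables (T : finType) (F : {set T * T}).

Definition out_arcs (x : T) : {set T * T} := [set a in F | a.1 == x].

Lemma card_out_arcs_sum : #|F| = \sum_x #|out_arcs x|.
Proof.
rewrite -sum1_card (partition_big fst predT) //=.
by apply: eq_bigr => x _; rewrite -sum1_card; apply: eq_bigl => a; rewrite inE.
Qed.

Lemma card_arcs_outdeg2 (V : {set T}) :
  {in V, forall x, 1 < #|out_arcs x|} -> (exists2 a, a \in F & a.1 \notin V) ->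
  2 * #|V| + 1 <= #|F|.
Proof.
move=> deg2 [a Fa aV]; rewrite card_out_arcs_sum (bigID (mem V)) /=.
apply: leq_add.
  rewrite mulnC -sum_nat_const; apply: leq_sum => x; exact: deg2.
rewrite (bigD1 a.1) //= (leq_trans _ (leq_addr _ _)) // card_gt0.
by apply/set0Pn; exists a; rewrite inE Fa eqxx.
Qed.

Lemma acyclic_no_back_arc x p y :
  acyclic F -> path (arcs F) x p -> y \in x :: p -> ~~ arcs F (last x p) y.
Proof.
move=> acF x_path y_in; case/splitPl: y_in x_path => p1 p2 y_last.
rewrite cat_path last_cat y_last => /andP[_ p2_path].
apply/negP=> back.
have := acF y (rcons p2 y); rewrite rcons_path p2_path back last_rcons.
by case: p2 {p2_path back} => [|z p2'] /(_ isT erefl).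
Qed.

End ArcCounting.

Section Walks.
Variables (T : finType) (r : rel T).

Lemma walk_first_arc x y q :
  x != y -> walk r x y q -> exists2 u, r x u & walk r u y (behead q).
Proof.
case: q => [|u q] xy; first by rewrite /walk /= => /eqP xy_eq; rewrite xy_eq eqxx in xy.
by rewrite /walk /= -andbA => /and3P[xu uq q_last]; exists u; rewrite ?uq.
Qed.

Lemma avoiding_walk_first_arc v v' d q :
  v != d -> walk r v d q -> ~~ uses_link v v' v q ->
  exists u, [/\ r v u, u != v' & walk r u d (behead q)].
Proof.
case: q => [|u q] vd; first by rewrite /walk /= => /eqP vd_eq; rewrite vd_eq eqxx in vd.
rewrite /walk /uses_link /= -andbA !xpair_eqE eqxx /= => /and3P[vu uq q_last].
rewrite !negb_or => /andP[/andP[uv' _] _].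
by exists u; rewrite uq q_last.
Qed.

End Walks.

Lemma forwarding_subgraph_card_lb (T : finType) (e : rel T) s d p (F : {set T * T}) :
  s != d -> uniq (s :: p) -> forwarding_subgraph e s d p F ->
  avoids_single_link_failure s d p F -> 2 * size p + 1 <= #|F|.
Proof.
move=> sd p_uniq [_ acF /andP[pF /eqP p_last]].
have [p' p_def] : exists p', p = rcons p' d.
  case/lastP: p p_last {p_uniq pF} => [/= sd_eq|p' z]; first by rewrite sd_eq eqxx in sd.
  by rewrite last_rcons => ->; exists p'.
subst p; rewrite -rcons_cons rcons_uniq in p_uniq; case/andP: p_uniq => d_notin p'_uniq.
have p'F : path (arcs F) s p' by move: pF; rewrite rcons_path => /andP[].
move=> avoid; set V := [set x in s :: p'].
have -> : size (rcons p' d) = #|V| by rewrite cardsE (card_uniqP p'_uniq) size_rcons.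
have vertex_nth i : i <= size p' -> nth s (s :: rcons p' d) i = nth s (s :: p') i.
  by move=> i_le; rewrite -rcons_cons nth_rcons /= ltnS i_le.
apply: card_arcs_outdeg2 => [x|].
  rewrite inE => x_in; set i := index x (s :: p').
  have i_lt : i < size (rcons p' d) by rewrite size_rcons index_mem.
  have [q /andP[q_walk q_avoid]] := avoid i i_lt.
  have x_nth : nth s (s :: rcons p' d) i = x.
    by rewrite vertex_nth ?nth_index // -ltnS index_mem.
  rewrite x_nth in q_walk q_avoid.
  have xd : x != d by apply: contraNneq d_notin => <-.
  have [u [xu uv _]] := avoiding_walk_first_arc xd q_walk q_avoid.
  apply/card_gt1P; exists (x, u), (x, nth s (rcons p' d) i).
  have := (pathP s pF) i i_lt; rewrite x_nth => xv.
  by rewrite !inE !eqxx !andbT xpair_eqE eqxx uv; split.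
have := avoid (size p'); rewrite size_rcons ltnSn => /(_ isT)[q /andP[q_walk q_avoid]].
rewrite vertex_nth // nth_last /= nth_rcons ltnn eqxx in q_walk q_avoid.
have ld : last s p' != d by apply: contraNneq d_notin => <-; apply: mem_last.
have [u [lu ud u_walk]] := avoiding_walk_first_arc ld q_walk q_avoid.
have [y uy _] := walk_first_arc ud u_walk.
exists (u, y) => //; rewrite inE; apply: contraNN (acyclic_no_back_arc acF p'F) _.
by rewrite negbK.
Qed.

Lemma connected_on_universal (T : finType) (e : rel T) (A : {set T}) h :
  symmetric e -> h \in A -> {in A, forall z, z != h -> e h z} -> connected_on e A.
Proof.
move=> e_sym hA h_adj.
have to_h z : z \in A -> connect [rel u v | [&& e u v, u \in A & v \in A]] z h.
  move=> zA; have [-> //|zh] := eqVneq z h.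
  by apply: connect1; rewrite /= e_sym h_adj ?zA ?hA.
move=> x y xA yA; apply: connect_trans (to_h x xA) _.
have [-> //|yh] := eqVneq y h.
by apply: connect1; rewrite /= h_adj ?yA ?hA.
Qed.

Lemma acyclic_of_rank (T : finType) (F : {set T * T}) (rk : T -> nat) :
  (forall x y, arcs F x y -> rk x < rk y) -> acyclic F.
Proof.
move=> rk_lt x p x_path p_last.
have : uniq (x :: p).
  apply: (@map_uniq _ _ rk); apply: (sorted_uniq ltn_trans ltnn) => /=.
  by rewrite path_map; apply: sub_path x_path => u v /rk_lt.
case: p x_path p_last => [//|y p] _ /= p_last.
by rewrite -{1}p_last mem_last.
Qed.

Section PathWeights.
Variables (R : numDomainType) (T : finType) (w : T -> T -> R).

Lemma path_weight_cons x y q : path_weight w x (y :: q) = (w x y + path_weight w y q)%R.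
Proof. by rewrite /path_weight /= big_cons. Qed.

Lemma path_weight_ge_potential (e : rel T) (phi : T -> R) x q :
  (forall u v, e u v -> phi v - phi u <= w u v)%R ->
  path e x q -> (phi (last x q) - phi x <= path_weight w x q)%R.
Proof.
move=> step; elim: q x => [|y q IH] x /=; first by rewrite /path_weight big_nil subrr.
case/andP=> xy yq; rewrite path_weight_cons.
apply: le_trans (lerD (step _ _ xy) (IH _ yq)).
by rewrite [leRHS]addrC addrA subrK.
Qed.

Lemma shortest_path_of_potential (e : rel T) (phi : T -> R) s d p :
  (forall u v, e u v -> phi v - phi u <= w u v)%R ->
  simple_path e s d p -> path_weight w s p = (phi d - phi s)%R ->
  shortest_path e w s d p.
Proof.
move=> step p_simple p_weight; split=> // q /andP[q_path /eqP q_last].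
by rewrite p_weight -q_last (path_weight_ge_potential step).
Qed.

End PathWeights.

Lemma path_map_iota (T : Type) (r : rel T) (f : nat -> T) m n :
  (forall i, m <= i < m + n -> r (f i) (f i.+1)) -> path r (f m) (map f (iota m.+1 n)).
Proof.
elim: n m => [//|n IH] m step /=.
apply/andP; split; first by apply: step; lia.
by apply: IH => i i_range; apply: step; lia.
Qed.

Section TightExample.
Variable k : nat.
Hypothesis k_gt0 : 0 < k.

Local Notation vertex := ('I_k.+1 + bool)%type.

Definition spine (i : nat) : vertex := inl (inord i).

Definition tight_edge : rel vertex := fun x y =>
  match x, y with
  | inl i, inl j => (i.+1 == j :> nat) || (j.+1 == i :> nat)
  | inr a, inr b => a != b
  | _, _ => true
  end.

Definition tight_weight (R : numDomainType) (x y : vertex) : R :=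
  match x, y with inl _, inl _ => 1 | _, _ => k%:R end%R.

Definition spine_height (R : numDomainType) (x : vertex) : R :=
  match x with inl i => (i : nat)%:R | inr _ => 0 end%R.

Definition tight_primary : seq vertex := map spine (iota 1 k).

Definition tight_fs : {set vertex * vertex} :=
  [set (spine i, spine i.+1) | i : 'I_k] :|: [set (spine i, inr false) | i : 'I_k]
  :|: [set (inr false, spine k)].

Lemma spine_inj i j : i <= k -> j <= k -> spine i = spine j -> i = j.
Proof. by move=> ik jk [/(congr1 val)]; rewrite /= !inordK. Qed.

Lemma tight_simple : simple_graph tight_edge.
Proof.
split; first by case=> [i|a] [j|b] /=; [exact: orbC | | | rewrite eq_sym].
by case=> [i|a] /=; rewrite ?eqxx // orbb eqn_leq ltnn.
Qed.

Lemma tight_weight_pos (R : numDomainType) : positive_weights tight_edge (tight_weight R).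
Proof. by move=> [i|a] [j|b] _; rewrite /= ?ltr01 ?ltr0n. Qed.

Lemma tight_two_connected : two_connected tight_edge.
Proof.
have [e_sym _] := tight_simple.
have apex_adj b z : z != inr b -> tight_edge (inr b) z.
  by case: z => [//|c] /=; rewrite (inj_eq (@inr_inj _ _)) eq_sym.
split; first by rewrite card_sum card_ord card_bool addn2.
split; first by apply: (connected_on_universal (h := inr false)) => // z _; apply: apex_adj.
(* an apex other than [v] *)
move=> v; apply: (connected_on_universal (h := inr (v == inr false))) => //.
  by rewrite !inE; case: v => [//|[]].
by move=> z _; apply: apex_adj.
Qed.

Lemma spine_height_step (R : numDomainType) x y :
  tight_edge x y -> (spine_height R y - spine_height R x <= tight_weight R x y)%R.
Proof.
case: x y => [i|a] [j|b] /=.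
- case/orP=> /eqP <-; first by rewrite -natr1 addrAC subrr add0r.
  by rewrite (le_trans _ ler01) // subr_le0 ler_nat.
- by rewrite sub0r (le_trans _ (ler0n _ k)) // oppr_le0.
- by rewrite subr0 ler_nat -ltnS.
- by rewrite subrr.
Qed.

Lemma spine_path_weight (R : numDomainType) m n :
  path_weight (tight_weight R) (spine m) (map spine (iota m.+1 n)) = n%:R%R.
Proof.
elim: n m => [|n IH] m; first by rewrite /path_weight big_nil.
by rewrite /= path_weight_cons IH -natr1 addrC.
Qed.

Lemma nth_tight_primary i : i <= k -> nth (spine 0) (spine 0 :: tight_primary) i = spine i.
Proof. by move=> ik; rewrite -[_ :: _]/(map spine (iota 0 k.+1)) (nth_map 0) ?size_iota ?nth_iota. Qed.

Lemma last_tight_primary : last (spine 0) tight_primary = spine k.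
Proof.
rewrite -[last _ _]/(last (spine 0) (spine 0 :: tight_primary)) -nth_last.
by rewrite /= size_map size_iota nth_tight_primary.
Qed.

Lemma path_tight_primary (r : rel vertex) :
  (forall i, i < k -> r (spine i) (spine i.+1)) -> walk r (spine 0) (spine k) tight_primary.
Proof.
move=> step; rewrite /walk last_tight_primary eqxx andbT.
by apply: path_map_iota => i /andP[_ ik]; apply: step.
Qed.

Lemma tight_primary_shortest (R : numDomainType) :
  shortest_path tight_edge (tight_weight R) (spine 0) (spine k) tight_primary.
Proof.
apply: (shortest_path_of_potential (spine_height_step R)).
  apply/andP; split.
    by apply: path_tight_primary => i ik; rewrite /= !inordK ?eqxx // ltnS // ltnW.
  rewrite -[_ :: _]/(map spine (iota 0 k.+1)) map_inj_in_uniq ?iota_uniq // => i j.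
  by rewrite !mem_iota !ltnS => /andP[_ ik] /andP[_ jk]; apply: spine_inj.
by rewrite spine_path_weight /= !inordK // subr0.
Qed.

Lemma tight_fs_acyclic : acyclic tight_fs.
Proof.
pose rk (x : vertex) := if x is inl i then 2 * i else (2 * k).-1.
have rk_spine i : i <= k -> rk (spine i) = 2 * i by move=> ik; rewrite /rk /spine inordK.
have rk_apex : rk (inr false) = (2 * k).-1 by [].
apply: (@acyclic_of_rank _ _ rk) => x y; clearbody rk.
rewrite /arcs !inE => /orP[/orP[]/imsetP[i _ [-> ->]]|/eqP[-> ->]].
- by have ik := ltn_ord i; rewrite !rk_spine; lia.
- by have ik := ltn_ord i; rewrite rk_apex rk_spine; lia.
- by rewrite rk_apex rk_spine //; lia.
Qed.

Lemma tight_fs_forwarding :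
  forwarding_subgraph tight_edge (spine 0) (spine k) tight_primary tight_fs.
Proof.
split.
- move=> x y; rewrite !inE => /orP[/orP[]/imsetP[i _ [-> ->]]|/eqP[-> ->]] //=.
  by rewrite !inordK ?eqxx // ltnS // ltnW.
- exact: tight_fs_acyclic.
- apply: path_tight_primary => i ik; rewrite /arcs !inE.
  by apply/orP; left; apply/orP; left; apply/imsetP; exists (Ordinal ik).
Qed.

Lemma tight_fs_avoids : avoids_single_link_failure (spine 0) (spine k) tight_primary tight_fs.
Proof.
move=> i; rewrite size_map size_iota => ik; cbv zeta.
rewrite !nth_tight_primary ?(ltnW ik) //; exists [:: inr false; spine k].
rewrite /walk /uses_link /arcs /= !inE !xpair_eqE /spine /= !eqxx !andbF !orbF !orbT !andbT.
by apply/orP; right; apply/imsetP; exists (Ordinal ik).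
Qed.

Lemma card_tight_fs : #|tight_fs| <= 2 * k + 1.
Proof.
apply: leq_trans (leq_card_setU _ _).1 _; rewrite cards1 leq_add2r mul2n -addnn.
apply: leq_trans (leq_card_setU _ _).1 _.
by apply: leq_add; apply: leq_trans (leq_imset_card _ _) _; rewrite card_ord.
Qed.

End TightExample.

Theorem theorem1 (R : realFieldType) :
  (forall (T : finType) (e : rel T) (w : T -> T -> R) (s d : T) (p : seq T)
          (F : {set T * T}),
      simple_graph e -> positive_weights e w -> two_connected e ->
      s != d ->
      shortest_path e w s d p ->
      forwarding_subgraph e s d p F ->
      avoids_single_link_failure s d p F ->
      (2 * size p + 1 <= #|F|)%N)
  /\
  (forall k : nat, (0 < k)%N ->
     exists (T : finType) (e : rel T) (w : T -> T -> R) (s d : T) (p : seq T)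
            (F : {set T * T}),
       simple_graph e /\ positive_weights e w /\ two_connected e /\ s != d /\
       shortest_path e w s d p /\
       forwarding_subgraph e s d p F /\
       avoids_single_link_failure s d p F /\
       size p = k /\
       #|F| = (2 * size p + 1)%N).
Proof.
split=> [T e w s d p F _ _ _ sd [/andP[_ p_uniq] _]|k k_gt0].
  exact: forwarding_subgraph_card_lb.
have ends_ne : @spine k 0 != @spine k k.
  by apply: contraTneq k_gt0 => /spine_inj-> //; rewrite ltnn.
have shortest := tight_primary_shortest k R.
have [/andP[_ p_uniq] _] := shortest.
have forwarding := tight_fs_forwarding k_gt0.
have avoids := @tight_fs_avoids k.
have card_lb := forwarding_subgraph_card_lb ends_ne p_uniq forwarding avoids.
have size_primary : size (tight_primary k) = k by rewrite size_map size_iota.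
exists _, (@tight_edge k), (@tight_weight k R), (@spine k 0), (@spine k k),
  (tight_primary k), (tight_fs k).
split; first exact: tight_simple.
split; first exact: tight_weight_pos.
split; first exact: tight_two_connected.
do 5 split => //.
by apply/eqP; rewrite eqn_leq card_lb size_primary card_tight_fs.
Qed.
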